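(* For every integer $n\ge 1$, \[ m-A_m^{n}=0 \quad (m=1,\dots,2n), \qquad (2n+1)-A_{2n+1}^{n}=(-1)^n\frac{(n!)^2}{((2n)!)^2}. \]
   Context: For $n\ge1$ let $y_n(z)=\sum_{k=0}^{n}\frac{(n+k)!}{(n-k)!\,k!}\left(\frac{z}{2}\right)^k$ be the $n$-th Bessel polynomial and let $\alpha_{n1},\dots,\alpha_{nn}$ be its zeros (they are simple). Put $a_{nk}=1-\alpha_{nk}/2$ and $b_{nk}=1+\alpha_{nk}/2$ for $k=1,\dots,n$. For $m\ge1$ define $A_m^{n}=\sum_{k=1}^n\big(a_{nk}^m-b_{nk}^m\big)$. *)

(* zeros of Bessel polynomials live in the algebraically
   closed field algC (algebraic complex numbers). *)
From HB Require Import structures.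
From mathcomp Require Import all_boot all_order all_algebra all_field.
Set Implicit Arguments. Unset Strict Implicit. Unset Printing Implicit Defensive.
Import Order.TTheory GRing.Theory Num.Theory.
Local Open Scope ring_scope.

Definition bessel_poly (n : nat) : {poly algC} :=
  \poly_(k < n.+1)
    (((n + k)`!)%:R / (((n - k)`!)%:R * (k`!)%:R) / 2%:R ^+ k).

(* A_m^n = sum_k (a_{nk}^m - b_{nk}^m), with a = 1 - alpha/2, b = 1 + alpha/2,
   where rs enumerates the zeros alpha_{n1},...,alpha_{nn}. *)
Definition A_sum (m : nat) (rs : seq algC) : algC :=
  \sum_(a <- rs) ((1 - a / 2%:R) ^+ m - (1 + a / 2%:R) ^+ m).

(* Write b = alpha/2 for the zeros, P(x) = x^n y_n(2/x), whose roots are the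
   1/b, and M(x) = P(-x). Binomial expansion turns (1 + b)^m - (1 - b)^m into
   the power sums of the b, and Newton's identity reads these power sums off
   the series H = x - x P'/P + x M'/M. The ODEs satisfied by P and M force
   P'M - PM' - PM = -(-1)^n x^(2n), hence P M H = (-1)^n x^(2n+1) + O(x^(2n+2)):
   all power sums of order <= 2n cancel, and the one of order 2n+1 is
   (-1)^n / P(0)^2 with P(0) = (2n)!/n!. *)

From HB Require Import structures.
From mathcomp Require Import all_boot all_order all_algebra all_field.
From mathcomp Require Import ring zify.
Set Implicit Arguments.
Unset Strict Implicit.
Unset Printing Implicit Defensive.

Import Order.TTheory GRing.Theory Num.Theory.
Local Open Scope ring_scope.

Lemma prod_XsubC_inv (F : fieldType) (p : {poly F}) (bs : seq F) :
  size p = (size bs).+1 -> uniq bs -> all (fun b => root p b^-1) bs ->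
  p = (lead_coef p)%:P * \prod_(b <- bs) ('X - b^-1%:P).
Proof.
move=> size_p uniq_bs roots_bs.
rewrite -(big_map (fun b => b^-1) xpredT (fun z => 'X - z%:P)) mul_polyC.
apply: all_roots_prod_XsubC; first by rewrite size_map.
  by apply/allP => _ /mapP [b b_bs ->]; exact: (allP roots_bs).
by rewrite uniq_rootsE map_inj_uniq //; exact: invr_inj.
Qed.

Lemma mul_eqXnM_low_coefs (F : fieldType) (G H K : {poly F}) M :
  G`_0 != 0 -> G * H = 'X^M * K ->
  (forall j, (j < M)%N -> H`_j = 0) /\ H`_M = K`_0 / G`_0.
Proof.
move=> G0 GHK.
have coefGH j : (G * H)`_j = \sum_(i < j) H`_i * G`_(j - i) + G`_0 * H`_j.
  by rewrite mulrC coefM big_ord_recr /= subnn mulrC.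
have low j : (j < M)%N -> H`_j = 0.
  elim/ltn_ind: j => j IH jM; apply/eqP.
  move: (coefGH j); rewrite GHK coefXnM jM big1 ?add0r.
    by move/esym/eqP; rewrite mulf_eq0 (negbTE G0).
  by move=> i _; rewrite IH ?mul0r // (ltn_trans _ jM).
have top : G`_0 * H`_M = K`_0.
  move: (coefGH M); rewrite GHK coefXnM ltnn subnn big1 ?add0r // => i _.
  by rewrite low ?mul0r.
by split=> //; rewrite -top mulrC mulKf.
Qed.

Lemma coef_Xderiv (R : nzRingType) (p : {poly R}) j :
  ('X * p^`())`_j = j%:R * p`_j.
Proof. by rewrite coefXM; case: j => [|j]; rewrite ?mul0r // coef_deriv mulr_natl. Qed.

Lemma Xderiv_eq_scale (R : numDomainType) (p : {poly R}) k :
  'X * p^`() = k%:R *: p -> p = p`_k *: 'X^k.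
Proof.
move=> Euler; apply/polyP => j; rewrite coefZ coefXn.
have [->|jk] := eqVneq j k; first by rewrite mulr1.
have : (j%:R - k%:R) * p`_j = 0.
  by rewrite mulrBl -[k%:R * _]coefZ -Euler coef_Xderiv subrr.
by move/eqP; rewrite mulr0 mulf_eq0 subr_eq0 eqr_nat (negbTE jk) => /eqP.
Qed.

Lemma recurrence_ode (R : comNzRingType) (p : {poly R}) (a b s : R) :
  (forall j, (j.+1)%:R * (j%:R - a) * p`_j.+1 = s * (j%:R - b) * p`_j) ->
  'X * p^`()^`() = s%:P * ('X * p^`()) + a%:P * p^`() - (s * b)%:P * p.
Proof.
move=> rec; apply/polyP => j.
rewrite coefB coefD !coefCM !coef_Xderiv !coef_deriv.
apply/eqP; rewrite -subr_eq0; apply/eqP.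
transitivity ((j.+1)%:R * (j%:R - a) * p`_j.+1 - s * (j%:R - b) * p`_j); first by ring.
by rewrite rec subrr.
Qed.

Section TruncatedNewton.
Variable R : fieldType.
Implicit Types b : R.

Definition geom_poly (N : nat) b : {poly R} :=
  \poly_(i < N.+1) b ^+ i.

Lemma coef_geom_poly N b j :
  (j <= N)%N -> (geom_poly N b)`_j = b ^+ j.
Proof. by move=> jN; rewrite coef_poly ltnS jN. Qed.

Lemma mulXsubC_geom_poly N b : b != 0 ->
  ('X - b^-1%:P) * (geom_poly N b - 1) = (b ^+ N)%:P * 'X^(N.+1) - 'X.
Proof.
move=> b0; set x := b%:P * 'X.
have geomE : geom_poly N b = \sum_(i < N.+1) x ^+ i.
  rewrite /geom_poly poly_def; apply: eq_bigr => i _.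
  by rewrite exprMn -rmorphXn mul_polyC.
have XsubCE : 'X - b^-1%:P = b^-1%:P * (x - 1).
  by rewrite mulrBr mulr1 mulrA -polyCM mulVf // mul1r.
have bN : (b ^+ N)%:P = b^-1%:P * b%:P ^+ N.+1.
  by rewrite -rmorphXn -polyCM exprS mulKf.
rewrite XsubCE geomE mulrBr mulr1 -mulrA -subrX1 -XsubCE bN /x exprMn; ring.
Qed.

(* Newton's identity -x p'/p = sum_b sum_(i >= 1) b^i x^i for
   p = c prod_b (x - 1/b), truncated at order N. *)
Lemma newton_trunc N (c : R) (bs : seq R) :
  all (fun b => b != 0) bs ->
  exists Q, - ('X * (c%:P * \prod_(b <- bs) ('X - b^-1%:P))^`()) =
    c%:P * \prod_(b <- bs) ('X - b^-1%:P) * \sum_(b <- bs) (geom_poly N b - 1)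
    + 'X^(N.+1) * Q.
Proof.
elim: bs => [_ | b bs IH /andP [b0 /IH [Q eQ]]].
  by exists 0; rewrite !big_nil derivM derivC -polyC1 derivC; ring.
set P := \prod_(z <- bs) _ in eQ.
exists (('X - b^-1%:P) * Q - (b ^+ N)%:P * c%:P * P).
rewrite derivM derivC mul0r add0r in eQ.
rewrite !big_cons -/P derivM derivC mul0r add0r derivM derivXsubC mul1r.
transitivity (('X - b^-1%:P) * - ('X * (c%:P * P^`())) - 'X * (c%:P * P)); first by ring.
apply/eqP; rewrite eQ -subr_eq0 (_ : _ - _ = - (c%:P * P) *
  (('X - b^-1%:P) * (geom_poly N b - 1) - ((b ^+ N)%:P * 'X^(N.+1) - 'X))).
  by rewrite mulXsubC_geom_poly // subrr mulr0.
ring.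
Qed.
End TruncatedNewton.

Lemma natr_fact_neq0 (R : numDomainType) k : (k`!)%:R != 0 :> R.
Proof. by rewrite pnatr_eq0 -lt0n fact_gt0. Qed.

Section ReverseBessel.
Variables (R : numFieldType) (n : nat).

Definition rbessel_coef j : R :=
  ((2 * n - j)`!)%:R / ((j`!)%:R * ((n - j)`!)%:R).

(* [rbessel] is x^n y_n(2/x). *)
Definition rbessel : {poly R} := \poly_(j < n.+1) rbessel_coef j.

Definition rbesselN : {poly R} := \poly_(j < n.+1) ((-1) ^+ j * rbessel_coef j).

Lemma rbessel_coefS j : (j < n)%N ->
  (j.+1)%:R * (2 * n - j)%:R * rbessel_coef j.+1 = (n - j)%:R * rbessel_coef j.
Proof.
move=> jn; rewrite /rbessel_coef.
have -> : (2 * n - j = (2 * n - j.+1).+1)%N by lia.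
have -> : (n - j = (n - j.+1).+1)%N by lia.
rewrite !factS !natrM; field.
by rewrite !natr_fact_neq0 !nat1r !pnatr_eq0.
Qed.

Lemma coef_rbesselS j :
  (j.+1)%:R * (j%:R - (2 * n)%:R) * rbessel`_j.+1 = (j%:R - n%:R) * rbessel`_j.
Proof.
rewrite !coef_poly !ltnS; case: (ltngtP j n) => [jn | nj | ->]; last 2 first.
- by rewrite !mulr0.
- by rewrite subrr !mulr0 mul0r.
have natrBN k : (j <= k)%N -> j%:R - k%:R = - (k - j)%:R :> R.
  by move=> jk; rewrite natrB // opprB.
rewrite !natrBN ?(ltnW jn) //; last by lia.
by rewrite mulrN mulNr rbessel_coefS // mulNr.
Qed.

Lemma coef_rbesselN j : rbesselN`_j = (-1) ^+ j * rbessel`_j.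
Proof. by rewrite !coef_poly; case: ifP; rewrite ?mulr0. Qed.

Lemma coef_rbesselNS j :
  (j.+1)%:R * (j%:R - (2 * n)%:R) * rbesselN`_j.+1 =
  -1 * (j%:R - n%:R) * rbesselN`_j.
Proof.
rewrite !coef_rbesselN exprS.
transitivity (-1 * (-1) ^+ j *
  ((j.+1)%:R * (j%:R - (2 * n)%:R) * rbessel`_j.+1)); first by ring.
by rewrite coef_rbesselS; ring.
Qed.

Lemma rbessel_ode : 'X * rbessel^`()^`() =
  'X * rbessel^`() + ((2 * n)%:R)%:P * rbessel^`() - (n%:R)%:P * rbessel.
Proof.
have rec j : (j.+1)%:R * (j%:R - (2 * n)%:R) * rbessel`_j.+1 =
    1 * (j%:R - n%:R) * rbessel`_j by rewrite mul1r coef_rbesselS.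
by rewrite (recurrence_ode rec) polyC1 !mul1r.
Qed.

Lemma rbesselN_ode : 'X * rbesselN^`()^`() =
  - ('X * rbesselN^`()) + ((2 * n)%:R)%:P * rbesselN^`() + (n%:R)%:P * rbesselN.
Proof.
by rewrite (recurrence_ode coef_rbesselNS) mulN1r !polyCN mulN1r mulNr opprK.
Qed.

Lemma rbessel_coef_top : rbessel_coef n = 1.
Proof.
rewrite /rbessel_coef subnn fact0 mulr1 (_ : (2 * n - n = n)%N); last by lia.
by rewrite divff ?natr_fact_neq0.
Qed.

Lemma rbessel_coef0 : rbessel_coef 0 = ((2 * n)`!)%:R / (n`!)%:R.
Proof. by rewrite /rbessel_coef !subn0 fact0 mul1r. Qed.

Lemma rbessel_coef0_neq0 : rbessel_coef 0 != 0.
Proof. by rewrite rbessel_coef0 mulf_neq0 ?invr_eq0 ?natr_fact_neq0. Qed.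

Lemma size_rbessel : size rbessel = n.+1.
Proof. by rewrite size_poly_eq //= rbessel_coef_top oner_neq0. Qed.

Lemma size_rbesselN : size rbesselN = n.+1.
Proof. by rewrite size_poly_eq //= rbessel_coef_top mulr1 signr_eq0. Qed.

Lemma lead_coef_rbessel : lead_coef rbessel = 1.
Proof. by rewrite lead_coefE size_rbessel coef_poly ltnSn rbessel_coef_top. Qed.

Lemma lead_coef_rbesselN : lead_coef rbesselN = (-1) ^+ n.
Proof. by rewrite lead_coefE size_rbesselN coef_poly ltnSn rbessel_coef_top mulr1. Qed.

Lemma root_rbessel0 : ~~ root rbessel 0.
Proof. by rewrite /root horner_coef0 coef_poly rbessel_coef0_neq0. Qed.

Lemma hornerN_rbesselN x : rbesselN.[- x] = rbessel.[x].
Proof.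
rewrite !horner_poly; apply: eq_bigr => i _.
by rewrite mulrAC -exprMn mulN1r opprK mulrC.
Qed.

(* The numerator of P'/P - M'/M - 1; the two ODEs make it a monomial. *)
Definition rbessel_wronskian : {poly R} :=
  rbessel^`() * rbesselN - rbessel * rbesselN^`() - rbessel * rbesselN.

Lemma Xderiv_rbessel_wronskian :
  'X * rbessel_wronskian^`() = (2 * n)%:R *: rbessel_wronskian.
Proof.
rewrite -mul_polyC /rbessel_wronskian !derivE.
transitivity (('X * rbessel^`()^`()) * rbesselN - rbessel * ('X * rbesselN^`()^`())
   - 'X * rbessel^`() * rbesselN - 'X * rbessel * rbesselN^`()); first by ring.
by rewrite rbessel_ode rbesselN_ode; ring.
Qed.

Lemma coef_rbessel_wronskian_top : rbessel_wronskian`_(2 * n) = - (-1) ^+ n.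
Proof.
have P0 : rbessel != 0 by rewrite -size_poly_eq0 size_rbessel.
have M0 : rbesselN != 0 by rewrite -size_poly_eq0 size_rbesselN.
have dP : (size rbessel^`() <= n)%N by rewrite -ltnS -size_rbessel lt_size_deriv.
have dM : (size rbesselN^`() <= n)%N by rewrite -ltnS -size_rbesselN lt_size_deriv.
have small_deg (p q : {poly R}) : size p = n.+1 -> (size q <= n)%N ->
    (size (p * q)%R <= 2 * n)%N.
  by move=> sp sq; apply: leq_trans (size_polyMleq _ _) _; rewrite sp; lia.
rewrite !coefB [(rbessel^`() * _)`__]nth_default; last first.
  by rewrite mulrC small_deg ?size_rbesselN.
rewrite [(rbessel * _^`())`__]nth_default ?small_deg ?size_rbessel //.
rewrite subr0 sub0r.
have size_PM : size (rbessel * rbesselN) = (2 * n).+1.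
  by rewrite size_mul // size_rbessel size_rbesselN; lia.
rewrite -[(2 * n)%N]/((2 * n).+1.-1) -size_PM -lead_coefE.
by rewrite lead_coefM lead_coef_rbessel lead_coef_rbesselN mul1r.
Qed.

Lemma rbessel_wronskianE : rbessel_wronskian = - (-1) ^+ n *: 'X^(2 * n).
Proof.
by rewrite {1}(Xderiv_eq_scale Xderiv_rbessel_wronskian) coef_rbessel_wronskian_top.
Qed.

Section Roots.
Variable bs : seq R.
Hypotheses (uniq_bs : uniq bs) (size_bs : size bs = n).
Hypothesis roots_bs : all (fun b => root rbessel b^-1) bs.

Lemma rbessel_geom_identity : exists K,
  rbessel * rbesselN *
    (\sum_(b <- bs) (geom_poly (2 * n).+1 b - geom_poly (2 * n).+1 (- b)) + 'X)
  = 'X^((2 * n).+1) * (((-1) ^+ n)%:P + 'X * K).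
Proof.
set N := (2 * n).+1.
have nz : all (fun b => b != 0) bs.
  apply: sub_all roots_bs => b; apply: contraTneq => ->.
  by rewrite invr0 (negbTE root_rbessel0).
have nzN : all (fun b => b != 0) (map -%R bs).
  by rewrite all_map; apply: sub_all nz => b /=; rewrite oppr_eq0.
have fP : rbessel = (lead_coef rbessel)%:P * \prod_(b <- bs) ('X - b^-1%:P).
  by apply: prod_XsubC_inv; rewrite ?size_rbessel ?size_bs.
have fM : rbesselN = (lead_coef rbesselN)%:P * \prod_(b <- map -%R bs) ('X - b^-1%:P).
  apply: prod_XsubC_inv; first by rewrite size_map size_rbesselN size_bs.
    by rewrite map_inj_uniq //; exact: oppr_inj.
  rewrite all_map; apply: sub_all roots_bs => b /=.
  by rewrite /root invrN hornerN_rbesselN.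
have [Q1 e1] := newton_trunc N (lead_coef rbessel) nz; rewrite -fP in e1.
have [Q2 e2] := newton_trunc N (lead_coef rbesselN) nzN; rewrite -fM big_map in e2.
exists (rbessel * Q2 - Q1 * rbesselN).
set T1 := \sum_(b <- bs) (geom_poly N b - 1) in e1.
set T2 := \sum_(b <- bs) (geom_poly N (- b) - 1) in e2.
have -> : \sum_(b <- bs) (geom_poly N b - geom_poly N (- b)) = T1 - T2.
  by rewrite -sumrB; apply: eq_bigr => b _; ring.
have f1 : rbessel * T1 = - ('X * rbessel^`()) - 'X^(N.+1) * Q1 by rewrite e1; ring.
have f2 : rbesselN * T2 = - ('X * rbesselN^`()) - 'X^(N.+1) * Q2 by rewrite e2; ring.
transitivity ((rbessel * T1) * rbesselN - rbessel * (rbesselN * T2)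
  + 'X * rbessel * rbesselN); first by ring.
rewrite f1 f2.
transitivity (- ('X * rbessel_wronskian)
  + 'X^(N.+1) * (rbessel * Q2 - Q1 * rbesselN)).
  by rewrite /rbessel_wronskian; ring.
by rewrite rbessel_wronskianE -mul_polyC polyCN /N !exprS; ring.
Qed.

Lemma rbessel_power_sums j : (j <= (2 * n).+1)%N ->
  \sum_(b <- bs) (b ^+ j - (- b) ^+ j) + (j == 1%N)%:R =
  if j == (2 * n).+1 then (-1) ^+ n / rbessel_coef 0 ^+ 2 else 0.
Proof.
move=> jN; have [K PMH] := rbessel_geom_identity.
have PM0 : (rbessel * rbesselN)`_0 = rbessel_coef 0 ^+ 2.
  by rewrite coef0M !coef_poly /= expr0 mul1r.
have [|low top] := mul_eqXnM_low_coefs _ PMH.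
  by rewrite PM0 expf_neq0 ?rbessel_coef0_neq0.
set H := (X in _ * X = _) in PMH low top.
have <- : H`_j = \sum_(b <- bs) (b ^+ j - (- b) ^+ j) + (j == 1%N)%:R.
  rewrite coefD coef_sum coefX; congr (_ + _); apply: eq_bigr => b _.
  by rewrite coefB !coef_geom_poly.
case: eqP => [->|/eqP jN']; last by rewrite low // ltn_neqAle jN' jN.
by rewrite top PM0 coefD coefC coefXM /= addr0.
Qed.

End Roots.
End ReverseBessel.

Lemma sum_binomial_diff (R : comNzRingType) (bs : seq R) m :
  m%:R + \sum_(b <- bs) ((1 + b) ^+ m - (1 - b) ^+ m) =
  \sum_(i < m.+1)
    (\sum_(b <- bs) (b ^+ i - (- b) ^+ i) + (i == 1%N :> nat)%:R) *+ 'C(m, i).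
Proof.
under [RHS]eq_bigr do rewrite mulrnDl.
rewrite addrC [in RHS]big_split /=; congr (_ + _).
  under eq_bigr do rewrite !(addrC 1) !exprD1n -sumrB.
  rewrite exchange_big /=; apply: eq_bigr => i _.
  by rewrite -sumrMnl; apply: eq_bigr => b _; rewrite mulrnBl.
case: m => [|m]; first by rewrite big_ord1.
rewrite 2!big_ord_recl big1 ?addr0 /= => [|i _]; last by rewrite mul0rn.
by rewrite mul0rn add0r bin1.
Qed.

Lemma horner_rbessel_inv n (b : algC) : b != 0 ->
  b ^+ n * (rbessel algC n).[b^-1] = (bessel_poly n).[2%:R * b].
Proof.
move=> b0; rewrite !horner_poly big_distrr (reindex_inj rev_ord_inj).
apply: eq_bigr => i _ /=; rewrite subSS.
have le_in : (i <= n)%N by rewrite -ltnS.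
rewrite /rbessel_coef (_ : (2 * n - (n - i) = n + i)%N); last by lia.
rewrite (_ : (n - (n - i) = i)%N); last by lia.
rewrite -{1}(subnK le_in) exprD exprVn exprMn; field.
by rewrite !natr_fact_neq0 !expf_neq0 ?pnatr_eq0.
Qed.

Lemma root_rbessel_half_inv n (a : algC) :
  root (bessel_poly n) a -> root (rbessel algC n) (a / 2%:R)^-1.
Proof.
move=> root_a; have a0 : a != 0.
  apply: contraTneq root_a => ->; rewrite /root horner_coef0 coef_poly /=.
  by rewrite addn0 subn0 fact0 mulr1 expr0 divr1 divff ?oner_eq0 ?natr_fact_neq0.
have b0 : a / 2%:R != 0 by rewrite mulf_neq0 ?invr_eq0 ?pnatr_eq0.
move: (horner_rbessel_inv n b0).
rewrite [2%:R * _]mulrC mulfVK ?pnatr_eq0 // (rootP root_a).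
by move/eqP; rewrite mulf_eq0 expf_eq0 (negbTE b0) andbF.
Qed.

Theorem proposition1 (n : nat) (hn : (1 <= n)%N) (rs : seq algC)
  (hu : uniq rs) (hs : size rs = n) (hr : all (root (bessel_poly n)) rs) :
  (forall m : nat, (1 <= m <= 2 * n)%N -> m%:R - A_sum m rs = 0) /\
  ((2 * n).+1)%:R - A_sum (2 * n).+1 rs
    = (-1) ^+ n * ((n`!)%:R ^+ 2) / (((2 * n)`!)%:R ^+ 2).
Proof.
set bs := map (fun a => a / 2%:R) rs.
have uniq_bs : uniq bs.
  by rewrite map_inj_uniq // => a b /mulIf; apply; rewrite invr_eq0 pnatr_eq0.
have size_bs : size bs = n by rewrite size_map.
have roots_bs : all (fun b => root (rbessel algC n) b^-1) bs.
  by rewrite all_map; apply: sub_all hr => a; exact: root_rbessel_half_inv.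
have power_sums := rbessel_power_sums uniq_bs size_bs roots_bs.
have A_sumE m : m%:R - A_sum m rs = \sum_(i < m.+1)
    (\sum_(b <- bs) (b ^+ i - (- b) ^+ i) + (i == 1%N :> nat)%:R) *+ 'C(m, i).
  rewrite -sum_binomial_diff /A_sum big_map -sumrN.
  by congr (_ + _); apply: eq_bigr => b _; rewrite opprB.
split=> [m /andP [m1 m2n] | ].
  rewrite A_sumE big1 // => i _; rewrite power_sums; last by have := ltn_ord i; lia.
  by rewrite ifN ?mul0rn //; have := ltn_ord i; lia.
rewrite A_sumE big_ord_recr big1 /= => [|i _]; last first.
  by rewrite power_sums ?ifN ?mul0rn //; have := ltn_ord i; lia.
rewrite power_sums // eqxx binn mulr1n add0r rbessel_coef0; field.
by rewrite !natr_fact_neq0.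
Qed.
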